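(* Let $m,d,s$ be positive integers and $q$ a prime power with $d/m<q-1$, and let $\mathcal{C}=\mathcal{C}(m,d,s,q)$ be the multiplicity code. Let $A\subseteq\mathbb{F}_q^s$ be an interpolation set for homogeneous polynomials of degree at most $m-1$. Then for every $\boldsymbol{w}_0\in\mathbb{F}_q^s$, the set of coordinates $$R=\{\boldsymbol{w}_0+\lambda\boldsymbol{v}:\ \boldsymbol{v}\in A,\ \lambda\in\mathbb{F}_q\setminus\{0\}\}$$ is a recovering set for the coordinate indexed by $\boldsymbol{w}_0$; that is, for every codeword $\boldsymbol{y}=(y_{\boldsymbol{w}})_{\boldsymbol{w}\in\mathbb{F}_q^s}\in\mathcal{C}$, the symbol $y_{\boldsymbol{w}_0}$ is a function of $(y_{\boldsymbol{w}})_{\boldsymbol{w}\in R}$.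
   Context: For $\boldsymbol{i}=(i_1,\dots,i_s)$ a vector of nonnegative integers, $wt(\boldsymbol{i})=\sum_j i_j$ and $\boldsymbol{x}^{\boldsymbol{i}}=\prod_j x_j^{i_j}$. For $P\in\mathbb{F}_q[x_1,\dots,x_s]$, the $\boldsymbol{i}$-th Hasse derivative $P^{(\boldsymbol{i})}(\boldsymbol{x})$ is the coefficient of $\boldsymbol{z}^{\boldsymbol{i}}$ in $P(\boldsymbol{x}+\boldsymbol{z})\in\mathbb{F}_q[\boldsymbol{x},\boldsymbol{z}]$. Let $\Sigma=\mathbb{F}_q^{\binom{s+m-1}{s}}$ (indexed by the $\boldsymbol{i}$ with $wt(\boldsymbol{i})<m$), and $P^{(<m)}(\boldsymbol{w})=(P^{(\boldsymbol{i})}(\boldsymbol{w}))_{wt(\boldsymbol{i})<m}\in\Sigma$. The multiplicity code $\mathcal{C}(m,d,s,q)$ is the code of length $q^s$ over $\Sigma$ with coordinates indexed by $\mathbb{F}_q^s$, consisting of the words $(P^{(<m)}(\boldsymbol{w}))_{\boldsymbol{w}\in\mathbb{F}_q^s}$ for all $P\in\mathbb{F}_q[x_1,\dots,x_s]$ with $\deg(P)\le d$ (total degree). A polynomial is homogeneous if all its monomials have the same total degree. A set $A\subseteq\mathbb{F}_q^s$ is an interpolation set for homogeneous polynomials of degree at most $m-1$ if for every $0\le j\le m-1$, any two homogeneous polynomials of degree $j$ (allowing the zero polynomial) that agree on every point of $A$ are equal. *)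

From HB Require Import structures.
From mathcomp Require Import all_boot all_order all_algebra all_field.
From mathcomp Require Import mpoly.
Set Implicit Arguments. Unset Strict Implicit. Unset Printing Implicit Defensive.
Import GRing.Theory.
Local Open Scope ring_scope.

Notation point F s := {ffun 'I_s -> F}.

(* P(x+z) as a polynomial in z = (z_1..z_s) with coefficients in F[x_1..x_s]:
   substitute z_j |-> x_j + z_j in P (viewed with constant coefficients). *)
Definition shift_poly (F : finFieldType) (s : nat) (P : {mpoly F[s]})
  : {mpoly {mpoly F[s]}[s]} :=
  comp_mpoly [tuple ('X_j)%:MP + 'X_j | j < s] (map_mpoly (fun c : F => c%:MP_[s]) P).

(* i-th Hasse derivative P^(i) in F[x]: coefficient of z^i in P(x+z). *)
Definition hasse (F : finFieldType) (s : nat) (P : {mpoly F[s]}) (i : 'X_{1..s})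
  : {mpoly F[s]} := (shift_poly P)@_i.

(* Symbol of the multiplicity codeword of P at w, i.e. P^(<m)(w), as a function
   on multi-indices i; only indices with wt(i) = mdeg i < m are meaningful. *)
Definition same_symbol (F : finFieldType) (s m : nat) (P Q : {mpoly F[s]})
  (w : point F s) : Prop :=
  forall i : 'X_{1..s}, (mdeg i < m)%N -> (hasse P i).@[w] = (hasse Q i).@[w].

Definition homog_interpolation_set (F : finFieldType) (s m : nat)
  (A : {set point F s}) : Prop :=
  forall (j : nat), (j <= m.-1)%N -> forall P Q : {mpoly F[s]},
    P \is j.-homog -> Q \is j.-homog ->
    (forall v, v \in A -> P.@[v] = Q.@[v]) -> P = Q.

(* Total degree at most d (msize = 1 + total degree, 0 for the zero poly). *)
Definition deg_le (F : finFieldType) (s : nat) (P : {mpoly F[s]}) (d : nat) : bool :=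
  (msize P <= d.+1)%N.

Definition recovering_set (F : finFieldType) (s m d : nat)
  (R : {set point F s}) (w0 : point F s) : Prop :=
  forall P Q : {mpoly F[s]}, deg_le P d -> deg_le Q d ->
    (forall w, w \in R -> same_symbol m P Q w) -> same_symbol m P Q w0.

Definition line_point (F : finFieldType) (s : nat) (w0 : point F s) (lam : F)
  (v : point F s) : point F s := [ffun j => w0 j + lam * v j].

From HB Require Import structures.
From mathcomp Require Import all_boot all_order all_algebra all_field.
From mathcomp Require Import mpoly.
From mathcomp Require Import zify ring.
Set Implicit Arguments. Unset Strict Implicit. Unset Printing Implicit Defensive.
Import GRing.Theory.
Local Open Scope ring_scope.

(* Put H = P - Q and fix v in A.  The univariate polynomial g(X) = H(w0 + X v)
   has degree at most d.  Taylor-expanding H at w0 + lam v shows that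
   (X - lam)^m divides g for each of the q - 1 values lam <> 0, so g = 0 since
   d < m (q - 1).  Taylor-expanding at w0 instead, the coefficient of X^k in g
   is T_k(v), where T_k = sum_{wt(i) = k} H^(i)(w0) z^i is homogeneous of
   degree k.  Hence each T_k with k < m vanishes on A, so T_k = 0 by the
   interpolation property, i.e. all Hasse derivatives of H of weight < m vanish
   at w0. *)

Lemma mpoly_rmorph_ext (R S : nzRingType) n
    (f g : {rmorphism {mpoly R[n]} -> S}) :
  (forall c, f c%:MP = g c%:MP) -> (forall i, f 'X_i = g 'X_i) -> f =1 g.
Proof.
move=> fgC fgX; elim/mpolyind => [|c m p _ _ IHp]; first by rewrite !rmorph0.
rewrite !rmorphD IHp -mul_mpolyC !rmorphM fgC mpolyXE_id !rmorph_prod.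
by congr (_ * _ + _); apply: eq_bigr => i _; rewrite !rmorphXn fgX.
Qed.

Lemma eq_mmap (R S : nzRingType) n (f : R -> S) (h1 h2 : 'I_n -> S) :
  h1 =1 h2 -> mmap f h1 =1 mmap f h2.
Proof. by move=> eq_h p; apply: eq_bigr => m _; rewrite (mmap1_eq _ eq_h). Qed.

Lemma mmap1_rmorph (R S : nzRingType) n (f : {rmorphism R -> S}) (h : 'I_n -> R)
    (m : 'X_{1..n}) :
  mmap1 (fun j => f (h j)) m = f (mmap1 h m).
Proof. by rewrite /mmap1 rmorph_prod; apply: eq_bigr => j _; rewrite rmorphXn. Qed.

Lemma mmap1_scale (S : comNzRingType) n (c : 'I_n -> S) (y : S) (m : 'X_{1..n}) :
  mmap1 (fun j => c j * y) m = mmap1 c m * y ^+ mdeg m.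
Proof.
by rewrite /mmap1 mdegE -prodrXr -big_split; apply: eq_bigr => j _; rewrite exprMn.
Qed.

Lemma size_mmap1_le (R : nzRingType) n (y : 'I_n -> {poly R}) (m : 'X_{1..n}) :
  (forall j, size (y j) <= 2)%N -> (size (mmap1 y m) <= (mdeg m).+1)%N.
Proof.
move=> y_le2; rewrite /mmap1 mdegE.
apply: (big_ind2 (fun (p : {poly R}) (k : nat) => size p <= k.+1)%N)
  => [|p1 k1 p2 k2 hp1 hp2|j _].
- by rewrite size_poly1.
- by apply: leq_trans (size_polyMleq _ _) _; lia.
- apply: leq_trans (size_poly_exp_leq _ _) _; rewrite ltnS.
  by have := y_le2 j; case: (size (y j)) => [|[|[|]]] //=; rewrite mul1n.
Qed.

Lemma size_mmap_le (R : nzRingType) n (y : 'I_n -> {poly R}) (p : {mpoly R[n]}) :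
  (forall j, size (y j) <= 2)%N -> (size (mmap polyC y p) <= msize p)%N.
Proof.
move=> y_le2; rewrite /mmap big_seq.
apply: (big_ind (fun q : {poly R} => size q <= msize p)%N) => [|q1 q2|m m_p].
- by rewrite size_poly0.
- by move=> h1 h2; apply: leq_trans (size_polyD _ _) _; rewrite geq_max h1 h2.
- rewrite mul_polyC; apply: leq_trans (size_scale_leq _ _) _.
  exact: leq_trans (size_mmap1_le _ y_le2) (msize_mdeg_lt m_p).
Qed.

Lemma prod_XsubC_exp_dvdp (F : fieldType) (g : {poly F}) (m : nat) (r : seq F) :
  uniq r -> (forall x, x \in r -> ('X - x%:P) ^+ m %| g) ->
  (\prod_(x <- r) ('X - x%:P)) ^+ m %| g.
Proof.
elim: r => [|a r IHr] /=; first by rewrite big_nil expr1n dvd1p.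
case/andP => a_r r_uniq r_dvd; rewrite big_cons exprMn Gauss_dvdp.
  by rewrite r_dvd ?mem_head // IHr // => x x_r; rewrite r_dvd // inE x_r orbT.
apply/coprimep_expl/coprimep_expr.
by rewrite coprimep_sym coprimep_XsubC root_prod_XsubC a_r.
Qed.

Lemma poly_eq0_of_root_mult (F : fieldType) (g : {poly F}) (m : nat) (r : seq F) :
  uniq r -> (forall x, x \in r -> ('X - x%:P) ^+ m %| g) ->
  (size g <= m * size r)%N -> g = 0.
Proof.
move=> r_uniq r_dvd g_small; apply/eqP; apply: contraTT g_small => g_neq0.
set P := (\prod_(x <- r) ('X - x%:P)) ^+ m.
have size_P : (size P).-1 = (m * size r)%N by rewrite size_exp size_prod_XsubC mulnC.
have : (size P <= size g)%N := dvdp_leq g_neq0 (prod_XsubC_exp_dvdp r_uniq r_dvd).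
by rewrite -ltnNge; rewrite -size_poly_gt0 in g_neq0; lia.
Qed.

Section HasseDerivatives.
Variables (F : finFieldType) (s : nat).

HB.instance Definition _ := GRing.RMorphism.copy (@shift_poly F s)
  (comp_mpoly [tuple ('X_j)%:MP + 'X_j | j < s] \o map_mpoly (@mpolyC s F)).

Lemma hasseB (P Q : {mpoly F[s]}) i : hasse (P - Q) i = hasse P i - hasse Q i.
Proof. by rewrite /hasse rmorphB mcoeffB. Qed.

Lemma mmap_shift_poly (S : comNzRingType) (f : {rmorphism F -> S})
    (a : 'I_s -> F) (z : 'I_s -> S) (P : {mpoly F[s]}) :
  mmap f (fun j => f (a j) + z j) P = mmap (f \o meval a) z (shift_poly P).
Proof.
apply: (@mpoly_rmorph_ext _ _ _ (mmap f _) (mmap (f \o meval a) z \o @shift_poly F s))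
  => [c|i] /=.
  by rewrite mmapC /shift_poly map_mpolyC comp_mpolyC /= mmapC /= mevalC.
rewrite mmapX mmap1U /shift_poly.
change (map_mpoly (fun c : F => c%:MP_[s]) 'X_i) with (map_mpoly (@mpolyC s F) 'X_i).
rewrite map_mpolyX comp_mpolyXU -tnth_nth tnth_mktuple rmorphD /=.
by rewrite mmapC mmapX mmap1U /= mevalXU.
Qed.

Lemma mmap_polyC_affine (a v : 'I_s -> F) (Y : {poly F}) (P : {mpoly F[s]}) :
  mmap polyC (fun j => (a j)%:P + (v j)%:P * Y) P =
  \sum_(i <- msupp (shift_poly P)) ((hasse P i).@[a] * mmap1 v i)%:P * Y ^+ mdeg i.
Proof.
rewrite (mmap_shift_poly polyC a (fun j => (v j)%:P * Y)); apply: eq_bigr => i _.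
by rewrite mmap1_scale mmap1_rmorph mulrA -polyCM.
Qed.

Definition hasse_form (P : {mpoly F[s]}) (w : point F s) (k : nat) : {mpoly F[s]} :=
  \sum_(i <- msupp (shift_poly P) | mdeg i == k) (hasse P i).@[w] *: 'X_[i].

Lemma hasse_form_homog P w k : hasse_form P w k \is k.-homog.
Proof. by apply: rpred_sum => i /eqP <-; rewrite rpredZ // dhomogX. Qed.

Lemma mcoeff_hasse_form P w i : (hasse_form P w (mdeg i))@_i = (hasse P i).@[w].
Proof.
rewrite /hasse_form raddf_sum /=.
transitivity (\sum_(j <- msupp (shift_poly P) | j == i) (hasse P j).@[w]).
  rewrite big_mkcond [RHS]big_mkcond; apply: eq_bigr => j _ /=; rewrite mcoeffZ mcoeffX.
  case: (eqVneq j i) => [->|ne_ji]; first by rewrite !eqxx mulr1.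
  by rewrite mulr0; case: ifP.
rewrite -big_filter.
have [i_supp|/memN_msupp_eq0 Pi0] := boolP (i \in msupp (shift_poly P)).
  by rewrite filter_pred1_uniq ?msupp_uniq // big_seq1.
rewrite /hasse Pi0 meval0 big1_seq // => j /andP[_].
rewrite mem_filter => /andP[/eqP ->].
by rewrite /hasse Pi0 meval0.
Qed.

Definition line_restriction (P : {mpoly F[s]}) (w v : point F s) : {poly F} :=
  mmap polyC (fun j => (w j)%:P + (v j)%:P * 'X) P.

Lemma size_line_restriction P w v : (size (line_restriction P w v) <= msize P)%N.
Proof.
apply: size_mmap_le => j; rewrite addrC size_MXaddC.
by case: ifP => // _; rewrite ltnS size_polyC_leq1.
Qed.

Lemma coef_line_restriction P w v k :
  (line_restriction P w v)`_k = (hasse_form P w k).@[v].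
Proof.
rewrite /line_restriction mmap_polyC_affine coef_sum /hasse_form rmorph_sum /=.
rewrite [RHS]big_mkcond; apply: eq_bigr => i _ /=.
rewrite coefCM coefXn mevalZ mevalX eq_sym.
by case: eqP; rewrite ?mulr1 ?mulr0.
Qed.

Lemma line_restriction_XsubC_dvdp P w v (m : nat) (lam : F) :
  (forall i, (mdeg i < m)%N -> (hasse P i).@[line_point w lam v] = 0) ->
  ('X - lam%:P) ^+ m %| line_restriction P w v.
Proof.
move=> P_van.
have -> : line_restriction P w v =
    mmap polyC (fun j => (line_point w lam v j)%:P + (v j)%:P * ('X - lam%:P)) P.
  by apply: eq_mmap => j; rewrite ffunE polyCD polyCM; ring.
rewrite mmap_polyC_affine.
apply: (big_ind (fun p => ('X - lam%:P) ^+ m %| p)) => [|p q|i _]; first exact: dvdp0.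
  exact: dvdp_add.
have [i_small|i_large] := ltnP (mdeg i) m.
  by rewrite P_van // mul0r polyC0 mul0r dvdp0.
by apply: dvdp_mull; rewrite dvdp_exp2l.
Qed.

Lemma line_restriction_eq0 P w v (m d : nat) :
  (d < m * (#|F| - 1))%N -> (msize P <= d.+1)%N ->
  (forall lam, lam != 0 -> forall i, (mdeg i < m)%N ->
     (hasse P i).@[line_point w lam v] = 0) ->
  line_restriction P w v = 0.
Proof.
move=> d_lt P_small P_van.
apply: (@poly_eq0_of_root_mult _ _ m (enum (predC1 0))) => [|lam|].
- exact: enum_uniq.
- by rewrite mem_enum => lam_neq0; apply/line_restriction_XsubC_dvdp/P_van.
- rewrite -cardE cardC1 -subn1.
  exact: leq_trans (size_line_restriction P w v) (leq_trans P_small d_lt).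
Qed.

End HasseDerivatives.

Theorem theorem1 (F : finFieldType) (m d s : nat) :
  (0 < m)%N -> (0 < d)%N -> (0 < s)%N ->
  (d < m * (#|F| - 1))%N ->
  forall A : {set point F s}, homog_interpolation_set m A ->
  forall w0 : point F s,
    recovering_set m d
      [set line_point w0 lam v | v in A, lam in [set x : F | x != 0]]
      w0.
Proof.
move=> _ _ _ d_lt A A_interp w0 P Q P_deg Q_deg PQ_sym i i_lt.
set H := P - Q.
have H_small : (msize H <= d.+1)%N.
  by apply: leq_trans (msizeD_le _ _) _; rewrite msizeN geq_max; apply/andP.
have H_van v : v \in A -> forall lam : F, lam != 0 -> forall j, (mdeg j < m)%N ->
    (hasse H j).@[line_point w0 lam v] = 0.
  move=> vA lam lam_neq0 j j_lt; apply/eqP; rewrite hasseB mevalB subr_eq0; apply/eqP.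
  by apply: PQ_sym j_lt; apply: imset2_f; rewrite ?inE.
have form0 : hasse_form H w0 (mdeg i) = 0.
  apply: (A_interp (mdeg i)); [lia | exact: hasse_form_homog | exact: dhomog0 | ].
  move=> v vA; rewrite meval0 -coef_line_restriction.
  by rewrite (line_restriction_eq0 d_lt H_small (H_van v vA)) coef0.
by apply/eqP; rewrite -subr_eq0 -mevalB -hasseB -/H -mcoeff_hasse_form form0 mcoeff0.
Qed.
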